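(* Let $d\ge 2$ be an integer and let $a_1,\ldots,a_{d-1}$ be indeterminates over $\mathbb{C}$. Let $f=x^d+a_1x^{d-1}+\cdots+a_{d-2}x^2+a_{d-1}x\in\mathbb{C}[a_1,\ldots,a_{d-1}][x]$ (monic of degree $d$ in $x$, with zero constant term). For $k\in\{1,\ldots,d-1\}$ let $$H_k(f)=\binom{d}{k}x^{d-k}+\binom{d-1}{k}a_1x^{d-k-1}+\cdots+\binom{k}{k}a_{d-k}$$ be the $k$-th Hasse derivative of $f$ (with $a_d=0$), and let $R_k=\operatorname{Res}_x(f,H_k(f))\in\mathbb{C}[a_1,\ldots,a_{d-1}]$ be the resultant of $f$ and $H_k(f)$ with respect to $x$. Let $i\in\{d-3,d-2,d-1\}$ with $i\ge 1$. Then $$R_i\notin\sqrt{(R_1,\ldots,R_{i-1},R_{i+1},\ldots,R_{d-1})},$$ where the ideal is the ideal of $\mathbb{C}[a_1,\ldots,a_{d-1}]$ generated by $\{R_1,\ldots,R_{d-1}\}\setminus\{R_i\}$ and $\sqrt{\cdot}$ denotes its radical.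
   Context: The paper works over the field $K=\mathbb{C}$ (it notes that the corresponding radical-membership statements depend only on the characteristic, which is zero). The $k$-th Hasse derivative $H_k(f)$ equals $\frac{1}{k!}\frac{d^k f}{dx^k}$. *)

(* The base field C is modelled as R[i] = complex R where R
   is Stdlib's real numbers (a realType / rcfType via Rstruct), i.e. the
   complex numbers. *)
From HB Require Import structures.
From mathcomp Require Import all_boot all_order all_algebra.
From mathcomp Require Import complex.
From mathcomp Require Import Rstruct.
From mathcomp Require Import mpoly.

Set Implicit Arguments.
Unset Strict Implicit.
Unset Printing Implicit Defensive.

Import Order.TTheory GRing.Theory Num.Theory.
Local Open Scope ring_scope.

Definition CC : rcfType := Rdefinitions.R.
Notation Cx := (complex CC).

Definition in_ideal (R : comPzRingType) (gens : seq R) (x : R) : Prop :=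
  exists c : 'I_(size gens) -> R, x = \sum_(j < size gens) c j * gens`_j.

Definition in_radical (R : comPzRingType) (gens : seq R) (x : R) : Prop :=
  exists n : nat, in_ideal gens (x ^+ n).

(* f = x^d + a_1 x^(d-1) + ... + a_(d-1) x in C[a_1,...,a_(d-1)][x];
   the indeterminate a_(j+1) is 'X_j for j : 'I_(d-1). *)
Definition fgen (d : nat) : {poly {mpoly Cx[d.-1]}} :=
  'X^d + \sum_(j < d.-1) ('X_j)%:P * 'X^(d - j.+1).

(* R_k = Res_x(f, H_k(f)), where H_k(f) = f^`N(k) is the k-th Hasse
   derivative (formal k-th derivative divided by k!). *)
Definition Rk (d k : nat) : {mpoly Cx[d.-1]} :=
  resultant (fgen d) ((fgen d)^`N(k)).

From HB Require Import structures.
From mathcomp Require Import all_boot all_order all_algebra.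
From mathcomp Require Import complex.
From mathcomp Require Import Rstruct.
From mathcomp Require Import mpoly.
From mathcomp Require Import zify.
Import GRing.Theory Num.Theory.
Local Open Scope ring_scope.

(* Specialize a_(d-i) to 1 and every other a_k to 0, so that f becomes
   x^d + x^i.  For k <> i, both f and H_k(f) vanish at 0, hence so does R_k
   at this point.  On the other hand f and H_i(f) = C(d,i) x^(d-i) + 1 have no
   common root: it would satisfy x^(d-i) = -1, forcing C(d,i) = 1, which fails
   for 0 < i < d.  Since a power of R_i lying in the ideal would vanish at the
   point, R_i is not in the radical.  The argument works for every 0 < i < d,
   not only for the three largest values of i. *)

Lemma rmorph_not_in_radical (R : comPzRingType) (S : idomainType)
    (f : {rmorphism R -> S}) (gens : seq R) (x : R) :
  {in gens, forall g, f g = 0} -> f x != 0 -> ~ in_radical gens x.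
Proof.
move=> f_gens fx_nz [n [c xn_def]].
have : f (x ^+ n) = 0.
  rewrite xn_def raddf_sum big1 // => j _ /=.
  by rewrite rmorphM [f gens`_j]f_gens ?mulr0 // mem_nth.
by move/eqP; rewrite rmorphXn expf_eq0 (negbTE fx_nz) andbF.
Qed.

Lemma rmorph_resultant (aR rR : comNzRingType) (f : {rmorphism aR -> rR})
    (p q : {poly aR}) :
    size (map_poly f p) = size p -> size (map_poly f q) = size q ->
  f (resultant p q) = resultant (map_poly f p) (map_poly f q).
Proof.
move=> sp sq; rewrite /resultant /Sylvester_mx sp sq -det_map_mx /= map_col_mx.
by congr (\det (col_mx _ _)); apply: map_lin1_mx => v;
  rewrite map_poly_rV rmorphM /= map_rVpoly.
Qed.

Lemma resultant_eq0P (F : closedFieldType) (p q : {poly F}) : p != 0 ->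
  reflect (exists x, root p x && root q x) (resultant p q == 0).
Proof.
move=> p_nz; have g_nz : gcdp p q != 0 by rewrite gcdp_eq0 negb_and p_nz.
rewrite resultant_eq0 ltn_neqAle lt0n size_poly_eq0 g_nz andbT eq_sym.
by apply: (iffP (closed_rootP _)) => -[x x_root]; exists x;
  rewrite root_gcd in x_root *.
Qed.

Lemma nderivn_horner0 (R : nzSemiRingType) (p : {poly R}) k :
  p^`N(k).[0] = p`_k.
Proof. by rewrite horner_coef0 coef_nderivn addn0 binn mulr1n. Qed.

Lemma size_nderivn_leq (R : nzSemiRingType) (p : {poly R}) k :
  (size p^`N(k) <= size p - k)%N.
Proof.
by apply/leq_sizeP => j le_j; rewrite coef_nderivn nth_default ?mul0rn -?leq_subLR.
Qed.

Lemma size_nderivn (R : numDomainType) (p : {poly R}) k :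
  size p^`N(k) = (size p - k)%N.
Proof.
apply/eqP; rewrite eqn_leq size_nderivn_leq /=.
have [|lt_k_p] := leqP (size p) k; first by rewrite -subn_eq0 => /eqP->.
have p_nz : p != 0 by rewrite -size_poly_gt0; lia.
have -> : (size p - k = ((size p).-1 - k).+1)%N by lia.
have coef_nz : p^`N(k)`_((size p).-1 - k) != 0.
  rewrite coef_nderivn subnKC; last by lia.
  by rewrite mulrn_eq0 negb_or -lt0n bin_gt0 lead_coef_eq0 p_nz andbT; lia.
by rewrite ltnNge; apply: contra coef_nz => ?; rewrite nth_default.
Qed.

Lemma size_map_nderivn (aR : nzSemiRingType) (rR : numDomainType)
    (f : {rmorphism aR -> rR}) (p : {poly aR}) k :
  size (map_poly f p) = size p -> size (map_poly f p^`N(k)) = size p^`N(k).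
Proof.
move=> sp; apply/eqP; rewrite eqn_leq size_poly -nderivn_map size_nderivn sp.
exact: size_nderivn_leq.
Qed.

Lemma bin_gt1 n m : (0 < m < n)%N -> (1 < 'C(n, m))%N.
Proof.
case: n m => [|n] [|m] //= lt_m_n; rewrite binS.
have : (0 < 'C(n, m))%N by rewrite bin_gt0; lia.
have : (0 < 'C(n, m.+1))%N by rewrite bin_gt0; lia.
lia.
Qed.

Section XnDXn.
Variables (d i : nat).
Hypotheses (i_gt0 : (0 < i)%N) (i_lt_d : (i < d)%N).

Lemma XnDXn_neq0 (R : nzSemiRingType) : 'X^d + 'X^i != 0 :> {poly R}.
Proof. by rewrite -size_poly_gt0 size_polyDl !size_polyXn. Qed.

Lemma resultant_XnDXn_nderivn_eq0 (F : closedFieldType) k :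
    (0 < k)%N -> k != i -> k != d ->
  resultant ('X^d + 'X^i : {poly F}) ('X^d + 'X^i)^`N(k) = 0.
Proof.
move=> k_gt0 k_ne_i k_ne_d; apply/eqP/resultant_eq0P; first exact: XnDXn_neq0.
exists 0; rewrite !rootE nderivn_horner0 hornerD !hornerXn !expr0n coefD !coefXn.
by rewrite (negbTE k_ne_i) (negbTE k_ne_d) !gtn_eqF ?addr0 ?eqxx //; lia.
Qed.

Lemma resultant_XnDXn_nderivn_neq0 (F : numClosedFieldType) :
  resultant ('X^d + 'X^i : {poly F}) ('X^d + 'X^i)^`N(i) != 0.
Proof.
apply/negP => /(resultant_eq0P _ _ _ (XnDXn_neq0 _))-[x /andP[]].
rewrite nderivnD !nderivnXn subnn binn expr0 mulr1n !rootE !(hornerE, hornerMn).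
have -> : x ^+ d = x ^+ i * x ^+ (d - i) by rewrite -exprD subnKC // ltnW.
move=> /eqP root_f /eqP root_H.
have x_nz : x != 0.
  apply: contra_eq_neq root_H => ->.
  by rewrite expr0n subn_eq0 leqNgt i_lt_d /= mul0rn add0r oner_neq0.
have xdi_eq : x ^+ (d - i) = -1.
  apply/eqP; rewrite -addr_eq0; move: root_f; rewrite -{2}[x ^+ i]mulr1 -mulrDr.
  by move/eqP; rewrite mulf_eq0 expf_eq0 (negbTE x_nz) andbF.
move: root_H; rewrite xdi_eq mulNrn addrC => /eqP; rewrite subr_eq0 eq_sym pnatr_eq1.
by rewrite gtn_eqF // bin_gt1 ?i_gt0.
Qed.

End XnDXn.

(* 'X_j stands for a_(j+1), the coefficient of x^(d-j-1). *)
Definition spec_point (d i : nat) : 'I_d.-1 -> Cx :=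
  fun j => ((d - j.+1)%N == i)%:R.

Lemma fgen_monic d : fgen d \is monic.
Proof.
apply/monicP; rewrite lead_coefDl ?lead_coefXn // size_polyXn ltnS.
apply: (leq_trans (size_sum _ _ _)); apply/bigmax_leqP => j _.
apply: (leq_trans (size_polyMleq _ _)); rewrite size_polyC size_polyXn.
by have := leq_b1 ('X_j != 0); have := ltn_ord j; lia.
Qed.

Lemma fgen_spec d i : (0 < i < d)%N ->
  map_poly (meval (spec_point d i)) (fgen d) = 'X^d + 'X^i.
Proof.
case/andP=> i_gt0 i_lt_d; have j0_lt : ((d - i).-1 < d.-1)%N by lia.
rewrite /fgen rmorphD /= map_polyXn rmorph_sum /=; congr (_ + _).
under eq_bigr => j _ do
  rewrite rmorphM /= map_polyC map_polyXn /= mevalXU /spec_point.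
rewrite (bigD1 (Ordinal j0_lt)) //= big1 => [|j j_ne].
  by rewrite (_ : d - (d - i).-1.+1 = i)%N ?eqxx ?polyC1 ?mul1r ?addr0 //; lia.
rewrite (_ : ((d - j.+1)%N == i) = false) ?mul0r //.
by apply: contraNF j_ne => /eqP j_def; apply/eqP/val_inj => /=; lia.
Qed.

Lemma Rk_spec d i k : (0 < i < d)%N ->
  (Rk d k).@[spec_point d i] = resultant ('X^d + 'X^i) ('X^d + 'X^i)^`N(k).
Proof.
move=> i_range.
have size_spec :
    size (map_poly (meval (spec_point d i)) (fgen d)) = size (fgen d).
  by rewrite size_map_poly_id0 // (monicP (fgen_monic d)) rmorph1 oner_neq0.
by rewrite /Rk rmorph_resultant ?size_map_nderivn // -nderivn_map fgen_spec.
Qed.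

Theorem theorem1p8 (d i : nat) :
  (2 <= d)%N ->
  (i = d - 3 \/ i = d - 2 \/ i = d - 1)%N ->
  (1 <= i)%N ->
  ~ in_radical [seq Rk d k | k <- iota 1 d.-1 & k != i] (Rk d i).
Proof.
move=> _ i_top i_gt0; have i_range : (0 < i < d)%N by lia.
apply: (@rmorph_not_in_radical _ _ (meval (spec_point d i))).
- move=> r /mapP[k]; rewrite mem_filter mem_iota.
  move=> /andP[k_ne_i /andP[k_gt0 k_lt]] ->.
  by rewrite /= Rk_spec // resultant_XnDXn_nderivn_eq0 //; lia.
- by rewrite /= Rk_spec // resultant_XnDXn_nderivn_neq0 //; lia.
Qed.
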